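(* Let $\mathfrak{g}$ be a product by generators. Then $\dim Z(\mathfrak{g})\ge 6$ and $\dim \mathfrak{g}/C^1\mathfrak{g}\ge 4$. In particular, no filiform Lie algebra is a product by generators.
   Context: All Lie algebras are finite-dimensional, complex, nilpotent and nonabelian (in particular the one-dimensional algebra is excluded). $C^1\mathfrak{g}=[\mathfrak{g},\mathfrak{g}]$, $C^{k+1}\mathfrak{g}=[\mathfrak{g},C^k\mathfrak{g}]$, $Z(\mathfrak{g})$ is the center. Product by generators of two algebras $\mathfrak{g}_1,\mathfrak{g}_2$: take bases $\{X_1,\dots,X_{m_1}\}$, $\{X'_1,\dots,X'_{m_2}\}$ such that $X_1,\dots,X_{n_1}$ generate $\mathfrak{g}_1$ and $X_{n_1+1},\dots,X_{m_1}$ span $C^1\mathfrak{g}_1$, and similarly for $\mathfrak{g}_2$ with $n_2$ generators; $\mathfrak{g}_1\underline{\times}\mathfrak{g}_2$ is the Lie algebra on $\mathfrak{g}_1\oplus\mathfrak{g}_2\oplus\langle Z_1,\dots,Z_{n_1n_2}\rangle$ with the brackets of $\mathfrak{g}_1$ and of $\mathfrak{g}_2$, $[X_i,X'_j]=Z_{(i-1)n_2+j}$ for $i\le n_1$, $j\le n_2$, $[X_i,X'_j]=0$ otherwise, and the $Z_k$ central. A nilpotent Lie algebra $\mathfrak{g}$ is called a product by generators if there exist (nonabelian) subalgebras $\mathfrak{h}_1,\mathfrak{h}_2$ with $\mathfrak{g}\cong\mathfrak{h}_1\underline{\times}\mathfrak{h}_2$. A nilpotent Lie algebra of dimension $n$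 is filiform if $\dim C^k\mathfrak{g}=n-k-1$ for $1\le k\le n-1$ (maximal nilindex). *)

(* The main theorem is stated over K = R[i], R : realType,
   i.e. over the complex numbers. *)
From HB Require Import structures.
From mathcomp Require Import all_boot all_order all_algebra.
Set Implicit Arguments. Unset Strict Implicit. Unset Printing Implicit Defensive.
Import Order.TTheory GRing.Theory Num.Theory.
Local Open Scope ring_scope.

Record lie_algebra (K : fieldType) := LieAlgebra {
  lie_carrier :> vectType K;
  lie_br : lie_carrier -> lie_carrier -> lie_carrier;
  lie_br_linl : forall y, linear (lie_br ^~ y);
  lie_br_linr : forall x, linear (lie_br x);
  lie_br_alt : forall x, lie_br x x = 0;
  lie_jacobi : forall x y z,
    lie_br x (lie_br y z) + lie_br y (lie_br z x) + lie_br z (lie_br x y) = 0 }.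

Section LieDefs.
Variable K : fieldType.
Local Open Scope vspace_scope.

(* [U, V] : the span of all brackets [u, v], u in U, v in V (by bilinearity it is
   spanned by the brackets of basis vectors) *)
Definition lie_brs (g : lie_algebra K) (U V : {vspace g}) : {vspace g} :=
  << [seq lie_br u v | u <- vbasis U, v <- vbasis V] >>.

Fixpoint lcs (g : lie_algebra K) (k : nat) : {vspace g} :=
  if k is k'.+1 then lie_brs fullv (lcs g k') else fullv.

(* center Z(g) = { x | [x, y] = 0 for all y } = intersection over a basis of
   the kernels of x |-> [x, b] *)
Definition lie_center (g : lie_algebra K) : {vspace g} :=
  \bigcap_(b <- vbasis (fullv : {vspace g})) lker (linfun (fun x : g => lie_br x b)).

Definition nilpotent (g : lie_algebra K) : Prop := exists k, lcs g k = 0.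
Definition nonabelian (g : lie_algebra K) : Prop := lcs g 1 != 0.

Definition filiform (g : lie_algebra K) : Prop :=
  forall k, (1 <= k <= \dim (fullv : {vspace g}) - 1)%N ->
    \dim (lcs g k) = (\dim (fullv : {vspace g}) - k - 1)%N.

Definition lie_generates (g : lie_algebra K) (S : seq g) : Prop :=
  forall U : {vspace g}, {subset S <= U} ->
    (forall x y, x \in U -> y \in U -> lie_br x y \in U) -> U = fullv.

Definition lie_embeds (h g : lie_algebra K) : Prop :=
  exists f : 'Hom(h, g), lker f = 0 /\
    forall x y, f (lie_br x y) = lie_br (f x) (f y).

Definition adapted_basis (g : lie_algebra K) n k (Xg : n.-tuple g) (Xc : k.-tuple g)
  : Prop :=
  [/\ basis_of fullv (Xg ++ Xc), <<Xc>> = lcs g 1 & lie_generates Xg].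

Definition gen_coord (g : lie_algebra K) n k (Xg : n.-tuple g) (Xc : k.-tuple g)
  (x : g) : 'rV[K]_n :=
  \row_(i < n) coord (cat_tuple Xg Xc) (lshift k i) x.

(* Bracket of g1 x_ g2 on g1 (+) g2 (+) <Z_(i,j)>, Z-part stored as an n1 x n2
   matrix (entry (i,j) is the coefficient of Z_{(i-1)n2+j}).  It is the bilinear
   extension of the brackets of g1, g2, [X_i, X'_j] = Z_(i,j) for i <= n1, j <= n2,
   [X_i, X'_j] = 0 otherwise, Z central. *)
Definition prod_gen_br (g1 g2 : lie_algebra K) n1 k1 n2 k2
  (X1g : n1.-tuple g1) (X1c : k1.-tuple g1) (X2g : n2.-tuple g2) (X2c : k2.-tuple g2)
  (u v : (g1 * g2 * 'M[K]_(n1, n2))%type) : (g1 * g2 * 'M[K]_(n1, n2))%type :=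
  (lie_br u.1.1 v.1.1, lie_br u.1.2 v.1.2,
   (gen_coord X1g X1c u.1.1)^T *m gen_coord X2g X2c v.1.2
   - (gen_coord X1g X1c v.1.1)^T *m gen_coord X2g X2c u.1.2).

Definition product_by_generators (g : lie_algebra K) : Prop :=
  exists (h1 h2 : lie_algebra K) (n1 k1 n2 k2 : nat)
         (X1g : n1.-tuple h1) (X1c : k1.-tuple h1)
         (X2g : n2.-tuple h2) (X2c : k2.-tuple h2),
    [/\ lie_embeds h1 g, lie_embeds h2 g, nonabelian h1 & nonabelian h2] /\
    [/\ adapted_basis X1g X1c, adapted_basis X2g X2c &
        exists f : 'Hom((h1 * h2 * 'M[K]_(n1, n2))%type, g),
          [/\ lker f = 0, limg f = fullv &
              forall u v, f (prod_gen_br X1g X1c X2g X2c u v)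
                          = lie_br (f u) (f v)]].

End LieDefs.

From HB Require Import structures.
From mathcomp Require Import all_boot all_order all_algebra.
From mathcomp Require Import complex reals.
From mathcomp Require Import zify.
Set Implicit Arguments. Unset Strict Implicit. Unset Printing Implicit Defensive.
Import Order.TTheory GRing.Theory Num.Theory.
Local Open Scope ring_scope.

(* Let g = h1 x_ h2 with n1 and n2 generators.  A nonabelian Lie algebra
   needs at least two generators, so n1, n2 >= 2.  A bracket of g has its
   h_i-components in C^1 h_i, which is spanned by the non-generator basis
   vectors, so C^1 g misses the n1 + n2 generator directions and
   dim g/C^1 g >= 4.  The n1 n2 vectors Z_(i,j) are central, and so is the
   last nonzero term z_i of the lower central series of h_i: z_i is central
   in h_i and, lying in C^1 h_i, has no generator coordinates, so it also
   commutes with the other factor.  Hence dim Z(g) >= n1 n2 + 2 >= 6, whereas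
   a filiform algebra has dim g/C^1 g = 2. *)

Section LieBracket.
Variables (K : fieldType) (g : lie_algebra K).

Definition lie_brl (y x : g) := lie_br x y.
HB.instance Definition _ y := GRing.isLinear.Build K g g *:%R (lie_brl y) (lie_br_linl y).
HB.instance Definition _ x := GRing.isLinear.Build K g g *:%R (lie_br x) (lie_br_linr x).

Lemma lie_brDl (x y z : g) : lie_br (x + y) z = lie_br x z + lie_br y z.
Proof. by rewrite -[LHS]/(lie_brl z _) linearD. Qed.

Lemma lie_brDr (x y z : g) : lie_br x (y + z) = lie_br x y + lie_br x z.
Proof. exact: linearD. Qed.

Lemma lie_brZl a (x y : g) : lie_br (a *: x) y = a *: lie_br x y.
Proof. by rewrite -[LHS]/(lie_brl y _) linearZ. Qed.

Lemma lie_brZr a (x y : g) : lie_br x (a *: y) = a *: lie_br x y.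
Proof. exact: linearZ. Qed.

Lemma lie_br_suml I (r : seq I) (P : pred I) (F : I -> g) y :
  lie_br (\sum_(i <- r | P i) F i) y = \sum_(i <- r | P i) lie_br (F i) y.
Proof. exact: (linear_sum (lie_brl y)). Qed.

Lemma lie_br_sumr I (r : seq I) (P : pred I) (F : I -> g) x :
  lie_br x (\sum_(i <- r | P i) F i) = \sum_(i <- r | P i) lie_br x (F i).
Proof. exact: linear_sum. Qed.

Lemma lie_br_anticomm (x y : g) : lie_br x y = - lie_br y x.
Proof.
apply/eqP; rewrite -addr_eq0; have := lie_br_alt (x + y).
by rewrite lie_brDl !lie_brDr !lie_br_alt add0r addr0 => ->.
Qed.

Lemma memv_lie_brs (U V : {vspace g}) x y :
  x \in U -> y \in V -> lie_br x y \in lie_brs U V.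
Proof.
move=> xU yV; rewrite (coord_vbasis xU) (coord_vbasis yV) lie_br_suml.
apply: memv_suml => i _; rewrite lie_brZl lie_br_sumr; apply: memvZ.
apply: memv_suml => j _; rewrite lie_brZr; apply/memvZ/memv_span.
by apply: allpairs_f; apply: mem_nth; rewrite size_tuple.
Qed.

Lemma lie_brs_sub_lcs1 (U V : {vspace g}) : (lie_brs U V <= lcs g 1)%VS.
Proof.
apply/span_subvP => _ /allpairsP [[u v] [_ _ ->]].
exact: memv_lie_brs (memvf _) (memvf _).
Qed.

Lemma memv_lie_center x : (forall y, lie_br x y = 0) -> x \in lie_center g.
Proof.
move=> xZ; rewrite /lie_center; elim: (tval _) => [|b s IHs].
  by rewrite big_nil memvf.
rewrite big_cons memv_cap IHs andbT memv_ker.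
by rewrite (lfunE (lie_brl b : {linear g -> g})) /= /lie_brl xZ.
Qed.

Lemma nilpotent_central_derived : nilpotent g -> nonabelian g ->
  exists z, [/\ z != 0, z \in lcs g 1 & forall y, lie_br z y = 0].
Proof.
move=> [k lcs_k]; rewrite /nonabelian => lcs1_neq0.
have lcs_eq0 : exists m, lcs g m == 0%VS by exists k; apply/eqP.
have [m lcs_m0 min_m] := ex_minnP lcs_eq0.
case: m => [|[|m]] in lcs_m0 min_m.
- by move: lcs1_neq0; rewrite -subv0 -[0%VS](eqP lcs_m0) subvf.
- by rewrite lcs_m0 in lcs1_neq0.
have lcs_m_neq0 : lcs g m.+1 != 0%VS by apply/negP => /min_m; rewrite ltnn.
exists (vpick (lcs g m.+1)); split; first by rewrite vpick0.
  exact/(subvP (lie_brs_sub_lcs1 _ _))/memv_pick.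
move=> y; apply/eqP; rewrite lie_br_anticomm oppr_eq0 -memv0 -(eqP lcs_m0).
exact: memv_lie_brs (memvf _) (memv_pick _).
Qed.

End LieBracket.

Section Embedding.
Variables (K : fieldType) (h g : lie_algebra K).

Lemma lie_morph_lcs (e : 'Hom(h, g)) k :
  (forall x y, e (lie_br x y) = lie_br (e x) (e y)) -> (e @: lcs h k <= lcs g k)%VS.
Proof.
move=> e_morph; elim: k => [|k IHk]; first exact: subvf.
rewrite limg_span; apply/span_subvP => _ /mapP [_ /allpairsP [[u v] [_ vB ->]] ->].
rewrite e_morph; apply: memv_lie_brs (memvf _) _.
exact/(subvP IHk)/memv_img/(vbasis_mem vB).
Qed.

Lemma lie_embeds_nilpotent : lie_embeds h g -> nilpotent g -> nilpotent h.
Proof.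
move=> [e [ker_e e_morph]] [k lcs_k]; exists k; apply/eqP.
rewrite -dimv_eq0 -(limg_dim_eq (f := e)) ?ker_e ?capv0 // dimv_eq0 -subv0.
by rewrite -lcs_k lie_morph_lcs.
Qed.

End Embedding.

Lemma lie_generates_size_ge2 (K : fieldType) (h : lie_algebra K) n (X : n.-tuple h) :
  lie_generates X -> nonabelian h -> (2 <= n)%N.
Proof.
move=> genX; apply: contraTT; rewrite -ltnNge ltnS => n_le1.
have X_line : (<<X>> <= <[X`_0]>)%VS.
  apply/span_subvP => _ /tnthP [i ->]; rewrite (tnth_nth 0).
  have -> : val i = 0%N by apply/eqP; rewrite -leqn0 -ltnS (leq_trans (ltn_ord i)).
  exact: memv_line.
have X_abelian x y : x \in <<X>>%VS -> y \in <<X>>%VS -> lie_br x y = 0.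
  move=> /(subvP X_line) /vlineP [a ->] /(subvP X_line) /vlineP [b ->].
  by rewrite lie_brZl lie_brZr lie_br_alt !scaler0.
have X_full : <<X>>%VS = fullv.
  by apply: genX => [x /memv_span | x y xX yX] //; rewrite X_abelian ?mem0v.
rewrite negbK -subv0; apply/span_subvP => _ /allpairsP [[u v] [_ _ ->]].
by rewrite X_abelian ?mem0v // X_full memvf.
Qed.

Section GeneratorCoordinates.
Variables (K : fieldType) (h : lie_algebra K) (n k : nat).
Variables (Xg : n.-tuple h) (Xc : k.-tuple h).

Lemma gen_coord_is_linear : linear (gen_coord Xg Xc).
Proof. by move=> a x y; apply/rowP => i; rewrite !mxE linearP. Qed.
HB.instance Definition _ :=
  GRing.isLinear.Build K h 'rV_n *:%R (gen_coord Xg Xc) gen_coord_is_linear.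

Hypothesis free_X : free (Xg ++ Xc).

Lemma gen_coord_Xg (i : 'I_n) : gen_coord Xg Xc Xg`_i = delta_mx 0 i.
Proof.
apply/rowP => j; rewrite !mxE eqxx /=.
have -> : Xg`_i = (cat_tuple Xg Xc)`_(lshift k i) by rewrite /= nth_cat size_tuple ltn_ord.
by rewrite coord_free // (inj_eq (@lshift_inj _ _)) eq_sym.
Qed.

Lemma gen_coord_Xc (j : 'I_k) : gen_coord Xg Xc Xc`_j = 0.
Proof.
apply/rowP => i; rewrite !mxE.
have -> : Xc`_j = (cat_tuple Xg Xc)`_(rshift n j).
  by rewrite /= nth_cat size_tuple ltnNge leq_addr addKn.
by rewrite coord_free // eq_rlshift.
Qed.

Lemma gen_coord_span_Xc x : x \in <<Xc>>%VS -> gen_coord Xg Xc x = 0.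
Proof.
move=> /coord_span ->; rewrite linear_sum big1 // => j _.
by rewrite linearZ /= (gen_coord_Xc j) scaler0.
Qed.

Lemma gen_coord_comb (r : 'rV_n) : gen_coord Xg Xc (\sum_(i < n) r 0 i *: Xg`_i) = r.
Proof.
rewrite linear_sum [RHS]row_sum_delta; apply: eq_bigr => i _.
by rewrite linearZ /= (gen_coord_Xg i).
Qed.

End GeneratorCoordinates.

Lemma gen_coord_lcs1 (K : fieldType) (h : lie_algebra K) n k
    (Xg : n.-tuple h) (Xc : k.-tuple h) x :
  adapted_basis Xg Xc -> x \in lcs h 1 -> gen_coord Xg Xc x = 0.
Proof.
by case=> /basis_free free_X span_Xc _; rewrite -span_Xc; apply: gen_coord_span_Xc.
Qed.

Lemma dim_pair (K : fieldType) (U V : vectType K) : dim (U * V)%type = (dim U + dim V)%N.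
Proof. by []. Qed.

Section ProductByGenerators.
Variables (K : fieldType) (g h1 h2 : lie_algebra K) (n1 k1 n2 k2 : nat).
Variables (X1g : n1.-tuple h1) (X1c : k1.-tuple h1).
Variables (X2g : n2.-tuple h2) (X2c : k2.-tuple h2).
Hypotheses (adapted1 : adapted_basis X1g X1c) (adapted2 : adapted_basis X2g X2c).

Local Notation P := (h1 * h2 * 'M[K]_(n1, n2))%type.
Local Notation br := (prod_gen_br X1g X1c X2g X2c).

Definition gen_proj (u : P) : 'rV[K]_n1 * 'rV[K]_n2 :=
  (gen_coord X1g X1c u.1.1, gen_coord X2g X2c u.1.2).

Lemma gen_proj_is_linear : linear gen_proj.
Proof. by move=> a u v; rewrite /gen_proj /= !linearP. Qed.
HB.instance Definition _ := GRing.isLinear.Build K P _ *:%R gen_proj gen_proj_is_linear.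

Lemma gen_proj_br u v : gen_proj (br u v) = 0.
Proof.
by rewrite /gen_proj /= !gen_coord_lcs1 //; apply: memv_lie_brs (memvf _) (memvf _).
Qed.

Lemma limg_gen_proj : limg (linfun gen_proj) = fullv.
Proof.
apply/vspaceP => [[r1 r2]]; rewrite memvf; apply/memv_imgP.
exists (\sum_(i < n1) r1 0 i *: X1g`_i, \sum_(j < n2) r2 0 j *: X2g`_j, 0).
  exact: memvf.
case: adapted1 adapted2 => /basis_free free1 _ _ [/basis_free free2 _ _].
by rewrite lfunE /= /gen_proj /= !gen_coord_comb.
Qed.

Lemma dim_lker_gen_proj : (\dim (lker (linfun gen_proj)) + (n1 + n2) = dim P)%N.
Proof.
have := limg_ker_dim (linfun gen_proj) fullv.
by rewrite capfv limg_gen_proj !dimvf !dim_pair !dim_matrix !mul1r.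
Qed.

Definition central_param (z1 : h1) (z2 : h2) (u : K^o * K^o * 'M[K]_(n1, n2)) : P :=
  (u.1.1 *: z1, u.1.2 *: z2, u.2).

Lemma central_param_is_linear z1 z2 : linear (central_param z1 z2).
Proof.
move=> a u v; have scale_regularA (b : K^o) (V : lmodType K) (z : V) :
    (a *: b) *: z = a *: (b *: z) := esym (scalerA a b z).
rewrite /central_param /= !scalerDl !scale_regularA.
(* the pair operations compute; [done] would instead unfold the Lie structures *)
exact: erefl.
Qed.
HB.instance Definition _ z1 z2 :=
  GRing.isLinear.Build K _ P *:%R (central_param z1 z2) (central_param_is_linear z1 z2).

Lemma lker_central_param z1 z2 :
  z1 != 0 -> z2 != 0 -> lker (linfun (central_param z1 z2)) = 0%VS.
Proof.
move=> z1_neq0 z2_neq0; apply/eqP; rewrite -subv0; apply/subvP => -[[a b] m].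
rewrite memv_ker memv0 lfunE /= /central_param /= -[0 : P]/(0, 0, 0) !xpair_eqE.
by rewrite !scaler_eq0 (negPf z1_neq0) (negPf z2_neq0) !orbF.
Qed.

Lemma dim_central_param : dim (K^o * K^o * 'M[K]_(n1, n2))%type = (2 + n1 * n2)%N.
Proof. by rewrite !dim_pair dim_matrix. Qed.

Lemma br_central_param z1 z2 u v :
  z1 \in lcs h1 1 -> z2 \in lcs h2 1 ->
  (forall y, lie_br z1 y = 0) -> (forall y, lie_br z2 y = 0) ->
  br (central_param z1 z2 u) v = 0.
Proof.
move=> z1_lcs z2_lcs z1_central z2_central.
rewrite /prod_gen_br /central_param /= !lie_brZl z1_central z2_central !scaler0.
by rewrite !(gen_coord_lcs1 _ (memvZ _ _)) // trmx0 mul0mx mulmx0 subrr.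
Qed.

Variable f : 'Hom(P, g).
Hypotheses (ker_f : lker f = 0%VS) (img_f : limg f = fullv).
Hypothesis f_morph : forall u v, f (br u v) = lie_br (f u) (f v).

Let f_surj (y : g) : exists u, y = f u.
Proof.
have /memv_imgP [u _ ->] : y \in limg f by rewrite img_f memvf.
by exists u.
Qed.

Let dim_img_f (U : {vspace P}) : \dim (f @: U) = \dim U.
Proof. by rewrite limg_dim_eq // ker_f capv0. Qed.

Lemma lcs1_sub_img_ker_gen_proj : (lcs g 1 <= f @: lker (linfun gen_proj))%VS.
Proof.
apply/span_subvP => _ /allpairsP [[x y] [_ _ ->]] /=.
have [u ->] := f_surj x; have [v ->] := f_surj y.
by rewrite -f_morph memv_img // memv_ker lfunE /= gen_proj_br.
Qed.

Lemma codim_lcs1_ge : (n1 + n2 <= \dim (fullv : {vspace g}) - \dim (lcs g 1))%N.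
Proof.
have := dimvS lcs1_sub_img_ker_gen_proj; rewrite dim_img_f.
rewrite -img_f dim_img_f dimvf -dim_lker_gen_proj => le_lcs1.
by rewrite -addnBAC ?leq_addl.
Qed.

Lemma dim_center_ge z1 z2 :
  z1 != 0 -> z2 != 0 -> z1 \in lcs h1 1 -> z2 \in lcs h2 1 ->
  (forall y, lie_br z1 y = 0) -> (forall y, lie_br z2 y = 0) ->
  (2 + n1 * n2 <= \dim (lie_center g))%N.
Proof.
move=> z1_neq0 z2_neq0 z1_lcs z2_lcs z1_central z2_central.
have center_img : (f @: limg (linfun (central_param z1 z2)) <= lie_center g)%VS.
  apply/subvP => _ /memv_imgP [_ /memv_imgP [u _ ->] ->].
  apply: memv_lie_center => y; have [v ->] := f_surj y.
  by rewrite -f_morph lfunE /= br_central_param // linear0.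
have := dimvS center_img.
by rewrite dim_img_f limg_dim_eq ?lker_central_param ?capv0 // dimvf dim_central_param.
Qed.

End ProductByGenerators.

Lemma filiform_codim_lcs1 (K : fieldType) (g : lie_algebra K) :
  filiform g -> (2 <= \dim (fullv : {vspace g}))%N ->
  (\dim (fullv : {vspace g}) - \dim (lcs g 1))%N = 2%N.
Proof. by move=> fil dim_ge2; rewrite fil; lia. Qed.

Theorem mainTheorem6 (R : realType) (g : lie_algebra R[i]) :
  nilpotent g -> nonabelian g -> product_by_generators g ->
  [/\ (6 <= \dim (lie_center g))%N,
      (4 <= \dim (fullv : {vspace g}) - \dim (lcs g 1))%N
    & ~ filiform g].
Proof.
move=> nil_g _ [h1 [h2 [n1 [k1 [n2 [k2 [X1g [X1c [X2g [X2c]]]]]]]]]].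
case=> [[emb1 emb2 nonab1 nonab2] [adapted1 adapted2 [f [ker_f img_f f_morph]]]].
have n1_ge2 : (2 <= n1)%N by case: adapted1 => _ _ /lie_generates_size_ge2; apply.
have n2_ge2 : (2 <= n2)%N by case: adapted2 => _ _ /lie_generates_size_ge2; apply.
have [z1 [z1_neq0 z1_lcs z1_central]] :=
  nilpotent_central_derived (lie_embeds_nilpotent emb1 nil_g) nonab1.
have [z2 [z2_neq0 z2_lcs z2_central]] :=
  nilpotent_central_derived (lie_embeds_nilpotent emb2 nil_g) nonab2.
have codim := codim_lcs1_ge adapted1 adapted2 ker_f img_f f_morph.
have dimZ := dim_center_ge adapted1 adapted2 ker_f img_f f_morph
  z1_neq0 z2_neq0 z1_lcs z2_lcs z1_central z2_central.
split; [nia | lia | move=> /filiform_codim_lcs1; lia].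
Qed.
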